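(* If the Markov chain $\mathcal{M}$ is started from a connected configuration with no holes, then it never reaches a configuration with a hole.
   Context: Let $\Gamma$ be the triangular lattice; a configuration is a finite set of occupied vertices (''locations'') of $\Gamma$, each occupied by one particle; it is connected if the subgraph induced by occupied locations is connected. A hole is a maximal finite connected set of unoccupied locations. For a location $\ell$, $N(\ell)$ is the set of particles at locations adjacent to $\ell$. For adjacent $\ell,\ell'$, let $\mathbb{S}=N(\ell)\cap N(\ell')$ and $N(\ell\cup\ell')=(N(\ell)\cup N(\ell'))$ minus particles located at $\ell$ or $\ell'$. Property 1: $|\mathbb{S}|\in\{1,2\}$ and every particle in $N(\ell\cup\ell')$ is connected to a particle of $\mathbb{S}$ by a lattice path all of whose vertices are particles of $N(\ell\cup\ell')$. Property 2: $|\mathbb{S}|=0$; each of $\ell,\ell'$ has at least one adjacent particle other than one located at the other location; the particles of $N(\ell)$ not at $\ell'$ are connected by paths within this set; the particles of $N(\ell')$ not at $\ell$ are connected by paths within this set. One step of $\mathcal{M}$ (bias $\lambda>0$) from $\sigma$: choose a particle $P$ uniformly (location $\ell$), a neighbor $\ell'$ of $\ell$ uniformly among six, and $q$ uniform in $(0,1)$. If $\ell'$ is occupied, do nothing. Otherwise let $t$ (resp. $t'$) be the number of triangular faces incident to $\ell$ (resp. $\ell'$) with all three vertices occupied when $P$ is at $\ell$ (resp. at $\ell'$); move $P$ to $\ell'$ if (1) $\ell$ does not have exactly five occupied neighbors, (2) $\ell,\ell'$ satisfy Property 1 or 2, and (3) $q<\lambda^{t'-t}$; else do nothing. *)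

From HB Require Import structures.
From mathcomp Require Import all_boot all_order all_algebra.
From mathcomp Require Import finmap.
Set Implicit Arguments. Unset Strict Implicit. Unset Printing Implicit Defensive.
Import Order.TTheory GRing.Theory Num.Theory.
Local Open Scope ring_scope.
Local Open Scope fset_scope.

(* Vertices of the triangular lattice, in axial coordinates: (a,b) is the
   point a*e1 + b*e2 with e1 = (1,0), e2 = (1/2, sqrt 3 / 2). *)
Definition loc : Type := (int * int)%type.

(* The six unit directions, in cyclic (counterclockwise) order; consecutive
   directions (cyclically) span the six triangular faces around a vertex. *)
Definition dirs : seq (int * int) :=
  [:: (1, 0); (0, 1); (-1, 1); (-1, 0); (0, -1); (1, -1)]%R.

Definition shift (l : loc) (d : int * int) : loc := ((fst l + fst d)%R, (snd l + snd d)%R).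

Definition nbr (l : loc) (i : nat) : loc := shift l (nth (0, 0) dirs (i %% 6)%N).

Definition adj (x y : loc) : bool := ((fst y - fst x)%R, (snd y - snd x)%R) \in dirs.

Definition config := {fset loc}.

Definition connected_set (S : {fset loc}) : Prop :=
  forall a b, a \in S -> b \in S ->
    exists p : seq loc, [/\ path adj a p, all (fun x => x \in S) p & last a p = b].

Definition connected_config (s : config) : Prop := connected_set s.

(* A hole: a maximal finite connected set of unoccupied locations, i.e. a
   nonempty finite connected set H of unoccupied sites that is closed under
   taking unoccupied neighbours (a finite connected component of the
   complement of the configuration). *)
Definition is_hole (s : config) (H : {fset loc}) : Prop :=
  [/\ H != fset0,
      forall h, h \in H -> h \notin s,
      connected_set H &
      forall h l, h \in H -> adj h l -> l \notin s -> l \in H].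

Definition has_hole (s : config) : Prop := exists H : {fset loc}, is_hole s H.

Definition Nb (s : config) (l : loc) : {fset loc} := [fset x in s | adj l x].

Definition Scommon (s : config) (l l' : loc) : {fset loc} := Nb s l `&` Nb s l'.

Definition Nunion (s : config) (l l' : loc) : {fset loc} :=
  (Nb s l `|` Nb s l') `\` [fset l; l'].

Definition property1 (s : config) (l l' : loc) : Prop :=
  let S := Scommon s l l' in
  let U := Nunion s l l' in
  [/\ (#|` S| == 1)%N || (#|` S| == 2)%N &
      forall x, x \in U -> exists2 y, y \in S &
        exists p : seq loc, [/\ path adj x p, all (fun z => z \in U) p & last x p = y]].

Definition property2 (s : config) (l l' : loc) : Prop :=
  [/\ #|` Scommon s l l'| = 0%N,
      Nb s l `\ l' != fset0,
      Nb s l' `\ l != fset0,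
      connected_set (Nb s l `\ l') &
      connected_set (Nb s l' `\ l)].

(* number of triangular faces incident to v with all three vertices occupied
   (v itself is assumed occupied, i.e. v \in s) *)
Definition tri (s : config) (v : loc) : nat :=
  count (fun i => (nbr v i \in s) && (nbr v i.+1 \in s)) (iota 0 6).

Definition move (s : config) (l l' : loc) : config := l' |` (s `\ l).

(* One step of M with bias lambda, given the random choices: the particle
   at l (l \in s), the direction index i < 6 (so l' = nbr l i) and q in (0,1). *)

Definition can_move (R : realFieldType) (lambda : R) (s : config)
  (l l' : loc) (q : R) : Prop :=
  [/\ l' \notin s,
      #|` Nb s l| <> 5%N,
      property1 s l l' \/ property2 s l l' &
      q < lambda ^ ((tri (move s l l') l')%:Z - (tri s l)%:Z)].

(* Since q is uniform on (0,1) and the acceptance event is the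
   interval (0, lambda^(t'-t)) ∩ (0,1), existence of such a q is equivalent
   to positive probability of the transition. *)
Definition M_step (R : realFieldType) (lambda : R) (s tau : config) : Prop :=
  exists l i q, [/\ l \in s, (i < 6)%N, 0 < q, q < 1 &
    let l' := nbr l i in
    (can_move lambda s l l' q /\ tau = move s l l') \/
    (~ can_move lambda s l l' q /\ tau = s)].

Inductive M_reachable (R : realFieldType) (lambda : R) (s : config) : config -> Prop :=
| M_refl : M_reachable lambda s s
| M_next : forall t u, M_reachable lambda s t -> M_step lambda t u ->
    M_reachable lambda s u.

From mathcomp Require Import all_boot all_order all_algebra.
From mathcomp Require Import finmap.
From mathcomp Require Import ring.
Set Implicit Arguments. Unset Strict Implicit. Unset Printing Implicit Defensive.
Import GRing.Theory.
Local Open Scope fset_scope.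

(* Moving the particle from l to l' only exchanges which of these two sites is
   vacant.  If the new configuration had a hole H, then H minus l, together with
   l' when H contains a vacant neighbour of l', would be a hole of the old one.
   That set is connected and closed under vacant neighbours thanks to two local
   facts about the eight sites around the edge {l, l'}: any two vacant neighbours
   of l are joined through sites vacant in both configurations, or both reach
   vacant neighbours of l' that way (and symmetrically); and l has a vacant
   neighbour other than l'.  These follow
   from Property 1 or 2 and the five-neighbour rule by inspecting all 2^8
   occupancy patterns of that ring of sites.  Neither the bias nor the
   connectivity of the initial configuration plays a role. *)

Lemma shift0 (x : loc) : shift x (0, 0)%R = x.
Proof. by case: x => a b; rewrite /shift /= !addr0. Qed.

Lemma shiftA (x u v : loc) : shift (shift x u) v = shift x (shift u v).
Proof. by rewrite /shift /= !addrA. Qed.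

Lemma shift_inj (x : loc) : injective (shift x).
Proof. by case=> a b [c d] [/addrI -> /addrI ->]. Qed.

Lemma shift_sub (x y : loc) : shift x (y.1 - x.1, y.2 - x.2)%R = y.
Proof. by case: x y => a b [c d]; rewrite /shift /=; congr pair; ring. Qed.

Lemma adj_shift (x u v : loc) : adj (shift x u) (shift x v) = adj u v.
Proof.
have e (a b c : int) : (a + c - (a + b) = c - b)%R by ring.
by rewrite /adj /shift /= !e.
Qed.

Lemma adj0 (d : loc) : adj (0, 0)%R d = (d \in dirs).
Proof. by case: d => a b; rewrite /adj /= !subr0. Qed.

Lemma adjP x z : reflect (exists2 d, d \in dirs & z = shift x d) (adj x z).
Proof.
apply: (iffP idP) => [xz | [d dd ->]]; last by rewrite -{1}(shift0 x) adj_shift adj0.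
by exists (z.1 - x.1, z.2 - x.2)%R; rewrite ?shift_sub.
Qed.

Lemma adj_sym : symmetric adj.
Proof.
have dirsN : all (fun d => (- d.1, - d.2)%R \in dirs) dirs by vm_compute.
suff adjC x y : adj x y -> adj y x by move=> x y; apply/idP/idP => /adjC.
by move=> /(allP dirsN) /=; rewrite !opprB.
Qed.

Lemma adj_irr : irreflexive adj.
Proof. by move=> x; rewrite /adj !subrr. Qed.

Definition joined (P : pred loc) (x y : loc) : Prop :=
  exists p, [/\ path adj x p, all P p & last x p = y].

Lemma joined_refl P x : joined P x x.
Proof. by exists [::]. Qed.

Lemma joined1 (P : pred loc) x y : adj x y -> P y -> joined P x y.
Proof. by move=> xy Py; exists [:: y]; rewrite /= xy Py. Qed.

Lemma joined_trans P y x z : joined P x y -> joined P y z -> joined P x z.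
Proof.
move=> [p [xp Pp <-]] [q [yq Pq <-]].
by exists (p ++ q); rewrite cat_path all_cat last_cat xp yq Pp Pq.
Qed.

Lemma joined_sym (P : pred loc) x y : P x -> joined P x y -> joined P y x.
Proof.
move=> Px [p [xp Pp <-]]; exists (rev (belast x p)); split.
- by rewrite rev_path (eq_path (e' := adj)) // => a b; rewrite /= adj_sym.
- by rewrite all_rev; apply/allP => z /mem_belast; rewrite inE => /predU1P [->|/(allP Pp)].
- by case: p {xp Pp} => //= z p; rewrite rev_cons last_rcons.
Qed.

(** * A hole after a move yields a hole before it *)

Definition stays_vacant (s : config) (l l' : loc) : pred loc :=
  fun z => [&& z \notin s, z != l & z != l'].

Definition vacant_nbr (s : config) (l l' x : loc) : pred loc :=
  fun z => adj x z && stays_vacant s l l' z.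

Definition detour (s : config) (l l' x y : loc) : Prop :=
  forall e f, vacant_nbr s l l' x e -> vacant_nbr s l l' x f ->
    joined (stays_vacant s l l') e f \/
    (exists2 a, vacant_nbr s l l' y a & joined (stays_vacant s l l') e a) /\
    (exists2 b, vacant_nbr s l l' y b & joined (stays_vacant s l l') f b).

Section HoleBeforeMove.

Variables (s : config) (l l' : loc) (H : {fset loc}).
Hypotheses (l_in : l \in s) (l'_out : l' \notin s).
Hypothesis H_hole : is_hole (move s l l') H.

Local Notation vacant := (stays_vacant s l l').
Local Notation vnbr := (vacant_nbr s l l').

Lemma notin_move z : (z \notin move s l l') = (z == l) || vacant z.
Proof.
have ll' : l != l' by apply: contraNneq l'_out => <-.
rewrite /move in_fset1U in_fsetD1 /stays_vacant.
have [->|zl] := eqVneq z l; first by rewrite (negbTE ll').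
by rewrite /= negb_or andbC.
Qed.

Lemma H_vacant z : z \in H -> z != l -> vacant z.
Proof.
by case: H_hole => _ H_out _ _ /H_out; rewrite notin_move => /orP [/eqP ->|]; rewrite ?eqxx.
Qed.

Lemma H_adj x z : x \in H -> adj x z -> (z == l) || vacant z -> z \in H.
Proof.
by case: H_hole => _ _ _ H_closed xH xz zv; apply: H_closed xH xz _; rewrite notin_move.
Qed.

Let touches_l' := has (vnbr l') H.

Let H' := if touches_l' then l' |` (H `\ l) else H `\ l.

Lemma mem_H' z : (z \in H') = touches_l' && (z == l') || (z != l) && (z \in H).
Proof. by rewrite /H'; case: touches_l'; rewrite ?in_fset1U in_fsetD1. Qed.

Lemma l'_in_H' e : e \in H -> vnbr l' e -> l' \in H'.
Proof. by move=> eH ev; rewrite mem_H' eqxx andbT; apply/orP; left; apply/hasP; exists e. Qed.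

Lemma vacant_neq_l z : vacant z -> z != l.
Proof. by case/and3P. Qed.

Lemma mem_H'_of_H z : z \in H -> z != l -> z \in H'.
Proof. by rewrite mem_H' => -> ->; rewrite orbT. Qed.

Lemma H_vacant_path x p : x \in H -> path adj x p -> all vacant p -> all [in H] p.
Proof.
elim: p x => //= z p IH x xH /andP [xz zp] /andP [vz vp].
have zH : z \in H by apply: H_adj xH xz _; apply/orP; right.
by rewrite zH (IH z).
Qed.

Lemma joined_vacant_in_H x y : x \in H -> joined vacant x y -> y \in H.
Proof.
move=> xH [p [xp vp <-]]; have pH := H_vacant_path xH xp vp.
by have := mem_last x p; rewrite inE => /predU1P [->|/(allP pH)].
Qed.

Lemma joined_H'_of_vacant x y : x \in H -> joined vacant x y -> joined [in H'] x y.
Proof.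
move=> xH [p [xp vp <-]]; exists p; split => //.
apply/allP => z zp; apply: mem_H'_of_H; first exact: (allP (H_vacant_path xH xp vp)).
exact: vacant_neq_l (allP vp z zp).
Qed.

Hypothesis det_l' : detour s l l' l' l.

Lemma vnbr_l'_in_H e : touches_l' -> vnbr l' e -> e \in H.
Proof.
case/hasP => e0 e0H e0v ev.
have [|[[a av e0a] [b bv eb]]] := det_l' e0v ev; first exact: joined_vacant_in_H.
have lH : l \in H.
  apply: H_adj (joined_vacant_in_H e0H e0a) _ _; last by rewrite eqxx.
  by rewrite adj_sym; case/andP: av.
have bH : b \in H by apply: H_adj lH _ _; case/andP: bv => // _ ->; rewrite orbT.
by apply: joined_vacant_in_H bH (joined_sym _ eb); case/andP: ev.
Qed.

Hypothesis det_l : detour s l l' l l'.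

Lemma vnbr_l_joined y w : y \in H -> vnbr l y -> vnbr l w -> joined [in H'] y w.
Proof.
move=> yH yv wv.
have lH : l \in H.
  by apply: H_adj yH _ _; [rewrite adj_sym; case/andP: yv | rewrite eqxx].
have wH : w \in H by apply: H_adj lH _ _; case/andP: wv => // _ ->; rewrite orbT.
have [|[[a av ya] [b bv wb]]] := det_l yv wv; first exact: joined_H'_of_vacant.
have l'H' := l'_in_H' (joined_vacant_in_H yH ya) av.
have bH' : b \in H'.
  by apply: mem_H'_of_H (joined_vacant_in_H wH wb) (vacant_neq_l (andP bv).2).
apply: joined_trans (joined_H'_of_vacant yH ya) _.
apply: joined_trans (joined1 _ l'H') _; first by rewrite adj_sym; case/andP: av.
apply: joined_trans (joined1 _ bH') _; first by case/andP: bv.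
apply: joined_sym (joined_H'_of_vacant wH wb).
exact: mem_H'_of_H wH (vacant_neq_l (andP wv).2).
Qed.

Lemma path_H_joined_H' x p : x \in H -> x != l -> path adj x p -> all [in H] p ->
  if last x p == l then forall w, vnbr l w -> joined [in H'] x w
  else joined [in H'] x (last x p).
Proof.
move=> xH xl; elim/last_ind: p => [|p z IH].
  by rewrite /= (negbTE xl) => _ _; apply: joined_refl.
rewrite rcons_path all_rcons last_rcons => /andP [xp yz] /andP [zH pH].
have {IH} := IH xp pH.
have yH : last x p \in H by have := mem_last x p; rewrite inE => /predU1P [->|/(allP pH)].
move: (last x p) yH yz => y yH yz.
have [zl|zl] := eqVneq z l.
  subst z; have yl : y != l by apply: contraTneq yz => ->; rewrite adj_irr.
  rewrite (negbTE yl) => xy w wv; apply: joined_trans xy (vnbr_l_joined yH _ wv).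
  by rewrite /vacant_nbr adj_sym yz /=; apply: H_vacant.
have zH' := mem_H'_of_H zH zl.
case: eqP => [yl | _ xy]; last exact: joined_trans xy (joined1 yz zH').
by subst y; apply; rewrite /vacant_nbr yz /=; apply: H_vacant.
Qed.

Lemma H_joined_H' x y : x \in H -> y \in H -> x != l -> y != l -> joined [in H'] x y.
Proof.
move=> xH yH xl yl; case: H_hole => _ _ H_conn _.
have [p [xp pH xy]] := H_conn x y xH yH.
by have := path_H_joined_H' xH xl xp pH; rewrite xy (negbTE yl).
Qed.

Lemma H'_joined_l' z : touches_l' -> z \in H' -> joined [in H'] z l'.
Proof.
move=> t; rewrite mem_H' t /= => /predU1P [->|/andP [zl zH]]; first exact: joined_refl.
have /hasP [e eH ev] := t.
apply: joined_trans (H_joined_H' zH eH zl (vacant_neq_l (andP ev).2)) (joined1 _ _).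
  by rewrite adj_sym; case/andP: ev.
by rewrite mem_H' t eqxx.
Qed.

Lemma H'_connected : connected_set H'.
Proof.
move=> x y xH' yH'; case t: touches_l'.
  exact: joined_trans (H'_joined_l' t xH') (joined_sym yH' (H'_joined_l' t yH')).
by move: xH' yH'; rewrite !mem_H' t /= => /andP [xl xH] /andP [yl yH]; apply: H_joined_H'.
Qed.

Lemma H'_vacant z : z \in H' -> z \notin s.
Proof.
rewrite mem_H' => /orP [/andP [_ /eqP ->] // | /andP [zl zH]].
by case/and3P: (H_vacant zH zl).
Qed.

Lemma H'_closed h z : h \in H' -> adj h z -> z \notin s -> z \in H'.
Proof.
move=> + hz zs; have zl : z != l by apply: contraNneq zs => ->.
rewrite mem_H' => /orP [/andP [t /eqP hl'] | /andP [hl hH]].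
  subst h; have zl' : z != l' by apply: contraTneq hz => ->; rewrite adj_irr.
  have zv : vnbr l' z by rewrite /vacant_nbr hz /stays_vacant zs zl zl'.
  exact: mem_H'_of_H (vnbr_l'_in_H t zv) zl.
have [zl'|zl'] := eqVneq z l'.
  by subst z; apply: (l'_in_H' hH); rewrite /vacant_nbr adj_sym hz /=; apply: H_vacant.
have zH : z \in H by apply: H_adj hH hz _; rewrite /stays_vacant zs zl zl' orbT.
exact: mem_H'_of_H zH zl.
Qed.

Hypothesis vacant_l : exists a, vnbr l a.

Lemma H'_nonempty : H' != fset0.
Proof.
case: H_hole => /fset0Pn [h hH] _ _ _; apply/fset0Pn.
have [hl|hl] := eqVneq h l; last by exists h; apply: mem_H'_of_H.
subst h; have [a av] := vacant_l; exists a; apply: mem_H'_of_H (vacant_neq_l (andP av).2).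
by apply: H_adj hH _ _; case/andP: av => // _ ->; rewrite orbT.
Qed.

Lemma has_hole_before_move : has_hole s.
Proof.
exists H'; split; [exact: H'_nonempty | exact: H'_vacant | exact: H'_connected |].
exact: H'_closed.
Qed.

End HoleBeforeMove.

Lemma move_hole_free_of_detours (s : config) (l l' : loc) : l \in s -> l' \notin s ->
  (exists a, vacant_nbr s l l' l a) -> detour s l l' l l' -> detour s l l' l' l ->
  ~ has_hole s -> ~ has_hole (move s l l').
Proof.
move=> l_in l'_out vac_l det_l det_l' hole_free [H hole]; apply: hole_free.
exact: has_hole_before_move hole det_l' det_l vac_l.
Qed.

(** * The ring of eight sites around an edge *)

(* enum and #|_| are locked and do not reduce in the VM, hence the explicit
   enumeration below and the bounded dfs in ring_conn instead of connect. *)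
Definition ring_ords : seq 'I_8 := traject (@ordS 8) ord0 8.

Lemma mem_ring_ords m : m \in ring_ords.
Proof. by case: m => [[|[|[|[|[|[|[|[|m]]]]]]]] m8]. Qed.

Lemma ring_allP (P : pred 'I_8) : reflect (forall m, P m) (all P ring_ords).
Proof.
by apply: (iffP allP) => [P8 m | P8 m _]; [apply: P8; apply: mem_ring_ords | apply: P8].
Qed.

Lemma ring_hasP (P : pred 'I_8) : reflect (exists m, P m) (has P ring_ords).
Proof. by apply: (iffP hasP) => [[m _ Pm] | [m Pm]]; exists m => //; apply: mem_ring_ords. Qed.

Definition ring_adj (m n : 'I_8) : bool := n \in [:: ordS m; ord_pred m].

Definition ring_rel (q : pred 'I_8) : rel 'I_8 := fun m n => ring_adj m n && q n.

Definition ring_graph (q : pred 'I_8) (m : 'I_8) : seq 'I_8 :=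
  [seq n <- [:: ordS m; ord_pred m] | q n].

Definition ring_conn (q : pred 'I_8) (j k : 'I_8) : bool :=
  k \in dfs (ring_graph q) 8 [::] j.

Lemma ring_connP q j k :
  reflect (exists2 p, path (ring_rel q) j p & k = last j p) (ring_conn q j k).
Proof.
have grelE : grel (ring_graph q) =2 ring_rel q by move=> m n; rewrite /= mem_filter andbC.
apply: (iffP (dfs_pathP _ _ _ _)); rewrite ?card_ord ?leq_addl //.
  by case=> p jp ->; exists p; rewrite -?(eq_path grelE).
case=> p jp ->; exists p; rewrite ?(eq_path grelE) //.
by rewrite disjoint_sym; apply: eq_disjoint0.
Qed.

(* The VM evaluates eagerly, so bounded quantifiers range over filtered lists:
   a guard [A m ==> P m] would still compute every P m. *)
Definition ring_part (q : pred 'I_8) : seq 'I_8 := [seq m <- ring_ords | q m].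

Lemma all_ring_partP (q P : pred 'I_8) :
  reflect (forall m, q m -> P m) (all P (ring_part q)).
Proof.
apply: (iffP allP) => qP m; last by rewrite mem_filter => /andP [/qP].
by move=> qm; apply: qP; rewrite mem_filter qm mem_ring_ords.
Qed.

Lemma has_ring_partP (q P : pred 'I_8) :
  reflect (exists2 m, q m & P m) (has P (ring_part q)).
Proof.
apply: (iffP hasP) => -[m]; last by exists m; rewrite // mem_filter mem_ring_ords andbT.
by rewrite mem_filter => /andP [qm _]; exists m.
Qed.

Definition side_l (m : 'I_8) : bool := m <= 4.

Definition side_l' (m : 'I_8) : bool := (m == 0 :> nat) || (4 <= m).

Definition common (m : 'I_8) : bool := side_l m && side_l' m.

Lemma side_cover m : side_l m || side_l' m.
Proof. by rewrite /side_l /side_l' orbCA leq_total orbT. Qed.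

Definition side_connected (o A : pred 'I_8) : bool :=
  let S := ring_part (fun m => A m && o m) in
  all (fun j => all (ring_conn (fun m => A m && o m) j) S) S.

Definition ring_property1 (o : pred 'I_8) : bool :=
  has (fun m => common m && o m) ring_ords &&
  all (fun j => has (ring_conn o j) (ring_part (fun m => common m && o m))) (ring_part o).

Definition ring_property2 (o : pred 'I_8) : bool :=
  [&& all (fun m => ~~ o m) (ring_part common),
      has (fun m => side_l m && o m) ring_ords,
      has (fun m => side_l' m && o m) ring_ords,
      side_connected o side_l & side_connected o side_l'].

Definition ring_detour (o A B : pred 'I_8) : bool :=
  let vac := ring_part (fun m => A m && ~~ o m) in
  let exits := ring_part (fun m => B m && ~~ o m) in
  all (fun e => all (fun f => ring_conn (predC o) e f ||
    has (ring_conn (predC o) e) exits && has (ring_conn (predC o) f) exits) vac) vac.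

Definition ring_check (o : pred 'I_8) : bool :=
  (ring_property1 o || ring_property2 o) && has (fun m => side_l m && ~~ o m) ring_ords ==>
  ring_detour o side_l side_l' && ring_detour o side_l' side_l.

Fixpoint bitseqs (n : nat) : seq (seq bool) :=
  if n is n'.+1 then [seq b :: bs | b <- [:: true; false], bs <- bitseqs n'] else [:: [::]].

Lemma mem_bitseqs bs : bs \in bitseqs (size bs).
Proof.
elim: bs => //= b bs IH.
have := @allpairs_f _ _ _ (fun b bs => b :: bs) [:: true; false] (bitseqs (size bs)) b bs.
by apply; [case: b |].
Qed.

Lemma ring_check_all : all (fun bs => ring_check (fun m => nth false bs m)) (bitseqs 8).
Proof. by vm_compute. Qed.

Definition dir (j : nat) : loc := nth (0, 0)%R dirs (j %% 6).

Lemma nbrE l j : nbr l j = shift l (dir j).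
Proof. by []. Qed.

(* With l' = l + dir i, the sites other than l, l' adjacent to l or l' form the
   cycle 0, ..., 7 of ring_offset i: sites 0..4 are the neighbours of l in
   counterclockwise order, sites 4..7 and 0 those of l'. *)
Definition ring_offset (i : nat) (m : 'I_8) : loc :=
  nth (0, 0)%R [:: dir (i + 1); dir (i + 2); dir (i + 3); dir (i + 4); dir (i + 5);
    shift (dir i) (dir (i + 5)); shift (dir i) (dir i); shift (dir i) (dir (i + 1))] m.

Definition ring_site (l : loc) (i : nat) (m : 'I_8) : loc := shift l (ring_offset i m).

Definition ring_geometry (i : nat) : bool :=
  let off := ring_offset i in
  [&& all (fun m => all (fun n => (adj (off m) (off n) == ring_adj m n) &&
                                   ((off m == off n) ==> (m == n))) ring_ords) ring_ords,
      all (fun m => off m \notin [:: (0, 0)%R; dir i]) ring_ords,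
      all (fun m => (adj (0, 0)%R (off m) == side_l m) &&
                    (adj (dir i) (off m) == side_l' m)) ring_ords,
      all (fun d => (d == dir i) || has (fun m => side_l m && (d == off m)) ring_ords) dirs &
      all (fun d => (shift (dir i) d == (0, 0)%R) ||
                    has (fun m => side_l' m && (shift (dir i) d == off m)) ring_ords) dirs].

Lemma ring_geometry_all : all ring_geometry (iota 0 6).
Proof. by vm_compute. Qed.

Lemma ring_geometry_at i : ring_geometry i.
Proof.
have dir_mod k : dir (i %% 6 + k) = dir (i + k) by rewrite /dir modnDml.
have dir_mod0 : dir (i %% 6) = dir i by rewrite /dir modn_mod.
have : ring_geometry (i %% 6) by apply: (allP ring_geometry_all); rewrite mem_iota ltn_mod.
by rewrite /ring_geometry /ring_offset !dir_mod dir_mod0.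
Qed.

Section RingSites.

Variables (l : loc) (i : nat).

Local Notation l' := (nbr l i).
Local Notation site := (ring_site l i).

Lemma adj_ring_site m n : adj (site m) (site n) = ring_adj m n.
Proof.
case/and5P: (ring_geometry_at i) => /ring_allP /(_ m) /ring_allP /(_ n).
by case/andP => /eqP <- _ _ _ _ _; rewrite /ring_site adj_shift.
Qed.

Lemma ring_site_inj : injective site.
Proof.
move=> m n; case/and5P: (ring_geometry_at i) => /ring_allP /(_ m) /ring_allP /(_ n).
by case/andP => _ /implyP mn _ _ _ _ /shift_inj /eqP /mn /eqP.
Qed.

Lemma ring_site_neq m : (site m != l) && (site m != l').
Proof.
case/and5P: (ring_geometry_at i) => _ /ring_allP /(_ m) off_m _ _ _.
rewrite /ring_site nbrE -{2}(shift0 l) !(inj_eq (@shift_inj l)).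
by move: off_m; rewrite !inE negb_or.
Qed.

Lemma adj_l_ring_site m : adj l (site m) = side_l m.
Proof.
case/and5P: (ring_geometry_at i) => _ _ /ring_allP /(_ m) /andP [/eqP <- _] _ _.
by rewrite /ring_site -{1}(shift0 l) adj_shift.
Qed.

Lemma adj_l'_ring_site m : adj l' (site m) = side_l' m.
Proof.
case/and5P: (ring_geometry_at i) => _ _ /ring_allP /(_ m) /andP [_ /eqP <-] _ _.
by rewrite /ring_site nbrE adj_shift.
Qed.

Lemma adj_l_ring z : adj l z -> z != l' -> exists2 m, side_l m & z = site m.
Proof.
case/and5P: (ring_geometry_at i) => _ _ _ /allP cover _.
move=> /adjP [d /cover /orP [/eqP -> | /hasP [m _ /andP [lm /eqP ->]]] ->].
  by rewrite nbrE eqxx.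
by exists m.
Qed.

Lemma adj_l'_ring z : adj l' z -> z != l -> exists2 m, side_l' m & z = site m.
Proof.
case/and5P: (ring_geometry_at i) => _ _ _ _ /allP cover.
move=> /adjP [d /cover /orP [/eqP e | /hasP [m _ /andP [lm /eqP e]]] ->].
  by rewrite nbrE shiftA e shift0 eqxx.
by rewrite nbrE shiftA e; exists m.
Qed.

Lemma joined_of_ring_conn (P : pred loc) (q : pred 'I_8) j k :
  (forall m, q m -> P (site m)) -> ring_conn q j k -> joined P (site j) (site k).
Proof.
move=> qP /ring_connP [p jp ->]; exists (map site p); rewrite last_map; split => //.
  elim: p j jp => // m p IH j /andP [/andP [jm _] mp].
  by apply/andP; split; [rewrite adj_ring_site | apply: IH].
elim: p j jp => // m p IH j /andP [/andP [_ qm] mp].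
by rewrite map_cons /= qP // (IH _ mp).
Qed.

Lemma ring_conn_of_joined (P : pred loc) (q : pred 'I_8) j k :
  (forall z, P z -> exists2 m, q m & z = site m) ->
  joined P (site j) (site k) -> ring_conn q j k.
Proof.
move=> Pq [p [jp Pp jk]]; apply/ring_connP.
elim: p j jp Pp jk => [|z p IH] j; first by move=> _ _ /ring_site_inj ->; exists [::].
case/andP => jz zp /andP [Pz Pp] zk.
have [m qm zm] := Pq z Pz; subst z.
have [p' mp' ->] := IH m zp Pp zk.
by exists (m :: p') => //; apply/andP; rewrite /ring_rel -adj_ring_site jz qm.
Qed.

End RingSites.

(** * Properties 1 and 2 read on the ring *)

Lemma mem_Nb (s : config) x z : (z \in Nb s x) = (z \in s) && adj x z.
Proof. by rewrite /Nb !inE. Qed.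

Definition ring_occupancy (s : config) (l : loc) (i : nat) : seq bool :=
  mkseq (fun k => ring_site l i (inord k) \in s) 8.

Definition occupied (s : config) (l : loc) (i : nat) : pred 'I_8 :=
  fun m => nth false (ring_occupancy s l i) m.

Section RingOccupancy.

Variables (s : config) (l : loc) (i : nat).

Local Notation l' := (nbr l i).
Local Notation site := (ring_site l i).
Local Notation occ := (occupied s l i).

Lemma occE m : occ m = (site m \in s).
Proof. by rewrite /occupied nth_mkseq // inord_val. Qed.

Lemma vacant_ring_site m : stays_vacant s l l' (site m) = ~~ occ m.
Proof.
by case/andP: (ring_site_neq l i m) => ml ml'; rewrite /stays_vacant occE ml ml' !andbT.
Qed.

Lemma mem_Nb_l z : z \in Nb s l `\ l' <-> exists2 m, side_l m && occ m & z = site m.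
Proof.
rewrite in_fsetD1 mem_Nb; split => [/and3P [zl' zs lz] | [m /andP [lm om] ->]].
  by have [m lm zm] := adj_l_ring lz zl'; exists m; rewrite // lm occE -zm.
by case/andP: (ring_site_neq l i m) => _ ->; rewrite -occE om adj_l_ring_site.
Qed.

Lemma mem_Nb_l' z : z \in Nb s l' `\ l <-> exists2 m, side_l' m && occ m & z = site m.
Proof.
rewrite in_fsetD1 mem_Nb; split => [/and3P [zl zs l'z] | [m /andP [lm om] ->]].
  by have [m lm zm] := adj_l'_ring l'z zl; exists m; rewrite // lm occE -zm.
by case/andP: (ring_site_neq l i m) => -> _; rewrite -occE om adj_l'_ring_site.
Qed.

Lemma mem_Scommon z : z \in Scommon s l l' <-> exists2 m, common m && occ m & z = site m.
Proof.
rewrite in_fsetI !mem_Nb; split => [/andP [/andP [zs lz] /andP [_ l'z]] | [m]].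
  have zl' : z != l' by apply: contraTneq l'z => ->; rewrite adj_irr.
  have [m lm zm] := adj_l_ring lz zl'.
  by exists m => //; rewrite /common lm -(adj_l'_ring_site l i) -zm l'z occE -zm.
move=> /andP [/andP [lm l'm] om] ->.
by rewrite -occE om adj_l_ring_site adj_l'_ring_site lm l'm.
Qed.

Lemma mem_Nunion z : z \in Nunion s l l' <-> exists2 m, occ m & z = site m.
Proof.
rewrite /Nunion in_fsetD !in_fsetU !in_fset1 !mem_Nb negb_or.
split => [/andP [/andP [zl zl'] /orP [/andP [zs lz] | /andP [zs l'z]]] | [m om ->]].
- by have [m _ zm] := adj_l_ring lz zl'; exists m; rewrite // occE -zm.
- by have [m _ zm] := adj_l'_ring l'z zl; exists m; rewrite // occE -zm.
by rewrite ring_site_neq -occE om adj_l_ring_site adj_l'_ring_site side_cover.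
Qed.

Lemma has_ring_of_nonempty (X : {fset loc}) (q : pred 'I_8) :
  (forall z, z \in X <-> exists2 m, q m & z = site m) -> X != fset0 -> has q ring_ords.
Proof. by move=> memX /fset0Pn [z /memX [m qm _]]; apply/ring_hasP; exists m. Qed.

Lemma side_connected_of (X : {fset loc}) (A : pred 'I_8) :
  (forall z, z \in X <-> exists2 m, A m && occ m & z = site m) ->
  connected_set X -> side_connected occ A.
Proof.
move=> memX conX; apply/all_ring_partP => j Aj; apply/all_ring_partP => k Ak.
have jX : site j \in X by apply/memX; exists j.
have kX : site k \in X by apply/memX; exists k.
by apply: (ring_conn_of_joined (P := fun z => z \in X)) (conX _ _ jX kX) => z /memX.
Qed.

Lemma ring_property1_of : property1 s l l' -> ring_property1 occ.
Proof.
case=> S12 U_S; apply/andP; split.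
  by apply: has_ring_of_nonempty mem_Scommon _; apply: contraTneq S12 => ->; rewrite cardfs0.
apply/all_ring_partP => j oj.
have jU : site j \in Nunion s l l' by apply/mem_Nunion; exists j.
have [y /mem_Scommon [m cm ->] jm] := U_S _ jU.
apply/has_ring_partP; exists m => //.
by apply: (ring_conn_of_joined (P := fun z => z \in Nunion s l l')) jm => z /mem_Nunion.
Qed.

Lemma ring_property2_of : property2 s l l' -> ring_property2 occ.
Proof.
case=> S0 nl nl' cl cl'; apply/and5P; split.
- apply/all_ring_partP => m cm; apply/negP => om.
  have : site m \in Scommon s l l' by apply/mem_Scommon; exists m; rewrite ?cm.
  by rewrite (cardfs0_eq S0) inE.
- exact: has_ring_of_nonempty mem_Nb_l nl.
- exact: has_ring_of_nonempty mem_Nb_l' nl'.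
- exact: side_connected_of mem_Nb_l cl.
- exact: side_connected_of mem_Nb_l' cl'.
Qed.

Lemma ring_vacancy_of : l' \notin s -> #|` Nb s l| <> 5 ->
  has (fun m => side_l m && ~~ occ m) ring_ords.
Proof.
move=> l'_out Nb5; apply/negPn/negP => /hasPn full; apply: Nb5.
have -> : Nb s l = [fset z in map site (ring_part side_l)].
  apply/fsetP => z; rewrite mem_Nb in_fset; apply/andP/mapP => [[zs lz] | [m]].
    have zl' : z != l' by apply: contraNneq l'_out => <-.
    by have [m lm ->] := adj_l_ring lz zl'; exists m; rewrite // mem_filter lm mem_ring_ords.
  rewrite mem_filter mem_ring_ords andbT => lm ->.
  have := full m (mem_ring_ords m); rewrite lm negbK -occE => om.
  by rewrite om adj_l_ring_site.
rewrite card_fseq undup_id ?size_map //.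
by rewrite map_inj_uniq ?filter_uniq //; apply: ring_site_inj.
Qed.

Lemma detour_of_ring (x y : loc) (A B : pred 'I_8) :
  (forall z, vacant_nbr s l l' x z -> exists2 m, A m & z = site m) ->
  (forall m, B m -> adj y (site m)) ->
  ring_detour occ A B -> detour s l l' x y.
Proof.
move=> xA yB det e f ve vf.
have [me Ame eE] := xA e ve; have [mf Amf fE] := xA f vf.
move: ve vf; rewrite {}eE {}fE /vacant_nbr !vacant_ring_site => /andP [_ ome] /andP [_ omf].
move/all_ring_partP: det => /(_ me); rewrite Ame ome => /(_ isT).
move/all_ring_partP => /(_ mf); rewrite Amf omf => /(_ isT).
have vac m : predC occ m -> stays_vacant s l l' (site m) by rewrite vacant_ring_site.
have exit a : B a && ~~ occ a -> vacant_nbr s l l' y (site a).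
  by case/andP=> Ba oa; rewrite /vacant_nbr yB // vacant_ring_site.
case/orP => [c | /andP [/has_ring_partP [a Ba ca] /has_ring_partP [b Bb cb]]].
  by left; apply: joined_of_ring_conn vac c.
right; split; first by exists (site a); [apply: exit | apply: joined_of_ring_conn vac ca].
by exists (site b); [apply: exit | apply: joined_of_ring_conn vac cb].
Qed.

Lemma move_local_conditions : l' \notin s -> #|` Nb s l| <> 5 ->
  property1 s l l' \/ property2 s l l' ->
  [/\ exists a, vacant_nbr s l l' l a, detour s l l' l l' & detour s l l' l' l].
Proof.
move=> l'_out Nb5 props.
have check : ring_check occ.
  by have := mem_bitseqs (ring_occupancy s l i); rewrite size_mkseq => /(allP ring_check_all).
have vac := ring_vacancy_of l'_out Nb5.
have prop : ring_property1 occ || ring_property2 occ.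
  by case: props => [/ring_property1_of | /ring_property2_of] ->; rewrite ?orbT.
move: check; rewrite /ring_check prop vac => /andP [det_l det_l'].
split.
- have /ring_hasP [m /andP [lm om]] := vac.
  by exists (site m); rewrite /vacant_nbr adj_l_ring_site lm vacant_ring_site.
- apply: detour_of_ring det_l => [z /andP [lz /and3P [_ _ zl']] | m].
    exact: adj_l_ring lz zl'.
  by rewrite adj_l'_ring_site.
- apply: detour_of_ring det_l' => [z /andP [l'z /and3P [_ zl _]] | m].
    exact: adj_l'_ring l'z zl.
  by rewrite adj_l_ring_site.
Qed.

End RingOccupancy.

Lemma move_hole_free (s : config) (l : loc) (i : nat) :
  l \in s -> nbr l i \notin s ->
  #|` Nb s l| <> 5 -> property1 s l (nbr l i) \/ property2 s l (nbr l i) ->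
  ~ has_hole s -> ~ has_hole (move s l (nbr l i)).
Proof.
move=> l_in l'_out Nb5 props.
have [vac det_l det_l'] := move_local_conditions l'_out Nb5 props.
exact: move_hole_free_of_detours.
Qed.

Local Open Scope ring_scope.

Theorem lemma5 (R : realFieldType) (lambda : R) (s0 : config) :
  0 < lambda ->
  connected_config s0 -> ~ has_hole s0 ->
  forall s : config, M_reachable lambda s0 s -> ~ has_hole s.
Proof.
move=> _ _ hole_free0 s; elim=> // t u _ hole_free_t [l [i [q [l_in _ _ _ step]]]].
case: step => [[[l'_out Nb5 props _] ->] | [_ ->]] //.
exact: move_hole_free.
Qed.
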